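(* Let $\mathscr G$ be a 2-group (a monoidal groupoid in which every object is invertible) acting on a groupoid $\mathscr X$, and let $\tilde{\mathscr X}=\mathscr X/\mathscr G$ be the quotient 2-groupoid and $\mathscr X'=\pi_0(\mathscr X)/\pi_0(\mathscr G)$ the quotient 1-groupoid. Let $x\in\mathscr X$ with isomorphism class $\bar x\in\pi_0(\mathscr X)$, and let $\phi_x:\pi_1(\mathscr G)\to \operatorname{Aut}_{\mathscr X}x$ be the homomorphism induced by the action. Then there is a canonical equivalence of 2-groups $$\operatorname{Cone}\big(\pi_1(\mathscr G)\xrightarrow{\phi_x}\operatorname{Aut}_{\mathscr X}x\big)\xrightarrow{\sim}\operatorname{Ker}\big(\underline{\operatorname{Aut}}_{\tilde{\mathscr X}}x\to\operatorname{Aut}_{\mathscr X'}\bar x\big).$$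
   Context: Quotient groupoid: if a group $G$ acts on a set $X$, the groupoid $X/G$ has objects $X$, morphisms $x\to x'$ are the $g\in G$ with $gx=x'$, composition given by multiplication in $G$. Quotient 2-groupoid $\tilde{\mathscr X}=\mathscr X/\mathscr G$: objects are the objects of $\mathscr X$; for $x_1,x_2$ the groupoid $\underline{\operatorname{Mor}}_{\tilde{\mathscr X}}(x_1,x_2)$ has objects the pairs $(g,f)$ with $g\in\mathscr G$, $f\in\operatorname{Isom}(x_2,gx_1)$, and a morphism $(g,f)\to(g',f')$ is a morphism $g\to g'$ in $\mathscr G$ whose induced morphism $gx_1\to g'x_1$ equals $f'f^{-1}$; composition comes from the product in $\mathscr G$. $\pi_0$ denotes the set of isomorphism classes of objects; $\pi_0(\mathscr G)$ is a group acting on $\pi_0(\mathscr X)$, and there is a canonical functor $\tilde{\mathscr X}\to\mathscr X'$; $\operatorname{Aut}_{\mathscr X'}\bar x$ is the stabilizer of $\bar x$ in $\pi_0(\mathscr G)$, and $\underline{\operatorname{Aut}}_{\tilde{\mathscr X}}x=\underline{\operatorname{Mor}}_{\tilde{\mathscr X}}(x,x)$ is a 2-group. The kernel $\operatorname{Ker}(\underline{\operatorname{Aut}}_{\tilde{\mathscr X}}x\to\operatorname{Aut}_{\mathscr X'}\bar x)$ is the categorical fiber over the unit, i.e. the full sub-2-group of pairs $(g,f)$ with $g$ isomorphic to the unit object. $\pi_1(\mathscr G)=\operatorname{Aut}(1_{\mathscr G})$ (an abelian group); the action gives for each $x$ a homomorphism $\phi_x:\pi_1(\mathscr G)\to\operatorname{Aut}_{\mathscr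 X}x$, functorial in $x$, whose image is central; it is regarded as a crossed module with trivial action. For a crossed module $d:G^{-1}\to G^0$ (groups, action of $G^0$ on $G^{-1}$ written ${}^g\gamma$, with $d({}^g\gamma)=g\,d(\gamma)g^{-1}$ and ${}^{d(\gamma)}\gamma'=\gamma\gamma'\gamma^{-1}$), $\operatorname{Cone}(G^{-1}\xrightarrow{d}G^0)$ is the strict 2-group with objects $G^0$, $\operatorname{Mor}(g,g')=\{\gamma\in G^{-1}: d(\gamma)g=g'\}$, and tensor product of morphisms $(\gamma_1,\gamma_2)\mapsto\gamma_1\cdot{}^{g_1}\gamma_2$ for $\gamma_i\in\operatorname{Mor}(g_i,g_i')$. *)

(* Morphism sets are
   Types and equality of morphisms is Leibniz equality. *)

Set Implicit Arguments.
Unset Strict Implicit.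

Record Gpd := {
  Ob :> Type;
  Hom : Ob -> Ob -> Type;
  idm : forall a : Ob, Hom a a;
  comp : forall a b c : Ob, Hom b c -> Hom a b -> Hom a c;
  inv : forall a b : Ob, Hom a b -> Hom b a
}.
Arguments Hom {g} a b.
Arguments idm {g} a.
Arguments comp {g a b c} _ _.
Arguments inv {g a b} _.

Notation "g ∘ f" := (comp g f) (at level 40, left associativity).

Record isGroupoid (C : Gpd) : Prop := {
  comp_assoc : forall (a b c d : C) (h : Hom c d) (g : Hom b c) (f : Hom a b),
      h ∘ (g ∘ f) = (h ∘ g) ∘ f;
  comp_id_l : forall (a b : C) (f : Hom a b), idm b ∘ f = f;
  comp_id_r : forall (a b : C) (f : Hom a b), f ∘ idm a = f;
  inv_l : forall (a b : C) (f : Hom a b), inv f ∘ f = idm a;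
  inv_r : forall (a b : C) (f : Hom a b), f ∘ inv f = idm b
}.

Record Groupoid := {
  gd :> Gpd;
  gd_laws : isGroupoid gd
}.

Definition TwoGroupLaws (T : Gpd) (tens : T -> T -> T)
  (tensH : forall a a' b b' : T, Hom a a' -> Hom b b' -> Hom (tens a b) (tens a' b'))
  (one : T)
  (assoc : forall a b c : T, Hom (tens (tens a b) c) (tens a (tens b c)))
  (lun : forall a : T, Hom (tens one a) a)
  (run : forall a : T, Hom (tens a one) a) : Prop :=
  (forall a b : T, tensH _ _ _ _ (idm a) (idm b) = idm (tens a b)) /\
  (forall (a a' a'' b b' b'' : T) (f : Hom a a') (f' : Hom a' a'')
          (g : Hom b b') (g' : Hom b' b''),
      tensH _ _ _ _ (f' ∘ f) (g' ∘ g) = tensH _ _ _ _ f' g' ∘ tensH _ _ _ _ f g) /\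
  (forall (a a' b b' c c' : T) (f : Hom a a') (g : Hom b b') (h : Hom c c'),
      assoc a' b' c' ∘ tensH _ _ _ _ (tensH _ _ _ _ f g) h
      = tensH _ _ _ _ f (tensH _ _ _ _ g h) ∘ assoc a b c) /\
  (forall (a a' : T) (f : Hom a a'),
      lun a' ∘ tensH _ _ _ _ (idm one) f = f ∘ lun a) /\
  (forall (a a' : T) (f : Hom a a'),
      run a' ∘ tensH _ _ _ _ f (idm one) = f ∘ run a) /\
  (forall a b c d : T,
      tensH _ _ _ _ (idm a) (assoc b c d) ∘ assoc a (tens b c) d
        ∘ tensH _ _ _ _ (assoc a b c) (idm d)
      = assoc a b (tens c d) ∘ assoc (tens a b) c d) /\
  (forall a b : T,
      tensH _ _ _ _ (idm a) (lun b) ∘ assoc a one b = tensH _ _ _ _ (run a) (idm b)) /\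
  (forall a : T, exists b : T,
      inhabited (Hom (tens a b) one) /\ inhabited (Hom (tens b a) one)).

Record TwoGroup := {
  tg :> Gpd;
  tens : tg -> tg -> tg;
  tensH : forall a a' b b' : tg, Hom a a' -> Hom b b' -> Hom (tens a b) (tens a' b');
  one : tg;
  assoc : forall a b c : tg, Hom (tens (tens a b) c) (tens a (tens b c));
  lun : forall a : tg, Hom (tens one a) a;
  run : forall a : tg, Hom (tens a one) a;
  tg_groupoid : isGroupoid tg;
  tg_laws : TwoGroupLaws tensH assoc lun run
}.
Arguments tens {t} a b.
Arguments tensH {t a a' b b'} f g.
Arguments one t : clear implicits.
Arguments assoc {t} a b c.
Arguments lun {t} a.
Arguments run {t} a.

Definition ActionLaws (G : TwoGroup) (X : Gpd) (act : G -> X -> X)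
  (actH : forall (g g' : G) (y y' : X), Hom g g' -> Hom y y' -> Hom (act g y) (act g' y'))
  (mu : forall (g h : G) (y : X), Hom (act g (act h y)) (act (tens g h) y))
  (eta : forall y : X, Hom y (act (one G) y)) : Prop :=
  (forall (g : G) (y : X), actH _ _ _ _ (idm g) (idm y) = idm (act g y)) /\
  (forall (g g' g'' : G) (y y' y'' : X) (a : Hom g g') (a' : Hom g' g'')
          (f : Hom y y') (f' : Hom y' y''),
      actH _ _ _ _ (a' ∘ a) (f' ∘ f) = actH _ _ _ _ a' f' ∘ actH _ _ _ _ a f) /\
  (forall (g g' h h' : G) (y y' : X) (a : Hom g g') (b : Hom h h') (f : Hom y y'),
      mu g' h' y' ∘ actH _ _ _ _ a (actH _ _ _ _ b f)
      = actH _ _ _ _ (tensH a b) f ∘ mu g h y) /\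
  (forall (y y' : X) (f : Hom y y'),
      eta y' ∘ f = actH _ _ _ _ (idm (one G)) f ∘ eta y) /\
  (forall (g h k : G) (y : X),
      actH _ _ _ _ (assoc g h k) (idm y) ∘ mu (tens g h) k y ∘ mu g h (act k y)
      = mu g (tens h k) y ∘ actH _ _ _ _ (idm g) (mu h k y)) /\
  (forall (g : G) (y : X),
      actH _ _ _ _ (lun g) (idm y) ∘ mu (one G) g y ∘ eta (act g y) = idm (act g y)) /\
  (forall (g : G) (y : X),
      actH _ _ _ _ (run g) (idm y) ∘ mu g (one G) y ∘ actH _ _ _ _ (idm g) (eta y)
      = idm (act g y)).

Record Action (G : TwoGroup) (X : Gpd) := {
  act : G -> X -> X;
  actH : forall (g g' : G) (y y' : X), Hom g g' -> Hom y y' -> Hom (act g y) (act g' y');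
  mu : forall (g h : G) (y : X), Hom (act g (act h y)) (act (tens g h) y);
  eta : forall y : X, Hom y (act (one G) y);
  act_laws : ActionLaws actH mu eta
}.
Arguments act {G X} _ _ _.
Arguments actH {G X} _ {g g' y y'} _ _.
Arguments mu {G X} _ _ _ _.
Arguments eta {G X} _ _.

Definition pi1 (G : TwoGroup) : Type := Hom (one G) (one G).

Definition phi (G : TwoGroup) (X : Gpd) (A : Action G X) (x : X) (γ : pi1 G)
  : Hom x x :=
  inv (eta A x) ∘ actH A γ (idm x) ∘ eta A x.

(* Cone(pi_1(G) --phi_x--> Aut_X x), trivial action of Aut_X x on pi_1:  *)
(*   objects: u in Aut_X x; product u.v = u ∘ v; unit idm x;             *)
(*   composition and tensor of morphisms: product in pi_1(G)             *)
(*   (i.e. composition of endomorphisms of 1_G); it is a strict 2-group, *)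
(*   its associator and unitors are the identity morphisms (gamma = 1).  *)

Definition ConeHom (G : TwoGroup) (X : Gpd) (A : Action G X) (x : X) (u u' : Hom x x)
  : Type := { γ : pi1 G | phi A x γ ∘ u = u' }.
Arguments ConeHom {G X} A x u u'.

Definition cone_hom (G : TwoGroup) (X : Gpd) (A : Action G X) (x : X)
  (u u' : Hom x x) (γ : pi1 G) (H : phi A x γ ∘ u = u') : ConeHom A x u u' :=
  exist _ γ H.
Arguments cone_hom {G X A x u u'} γ H.

(* Ker(Aut_{X/G}(x) -> Aut_{X'}(xbar)): the full sub-2-group of the      *)
(* 2-group Aut_{X/G}(x) = Mor_{X/G}(x,x) on the pairs (g,f),             *)
(* f in Isom(x, g x), with g isomorphic to the unit object.              *)

Record KerOb (G : TwoGroup) (X : Gpd) (A : Action G X) (x : X) := {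
  kg : G;
  kf : Hom x (act A kg x);
  kiso : inhabited (Hom kg (one G))
}.
Arguments kg {G X A x} k.
Arguments kf {G X A x} k.
Arguments kiso {G X A x} k.

Definition KerHom (G : TwoGroup) (X : Gpd) (A : Action G X) (x : X)
  (k k' : KerOb A x) : Type :=
  { a : Hom (kg k) (kg k') | actH A a (idm x) ∘ kf k = kf k' }.

Definition kiso_tens (G : TwoGroup) (a b : G)
  (Ha : inhabited (Hom a (one G))) (Hb : inhabited (Hom b (one G)))
  : inhabited (Hom (tens a b) (one G)) :=
  match Ha, Hb with
  | inhabits f, inhabits g => inhabits (lun (one G) ∘ tensH f g)
  end.

(* Product in Aut_{X/G}(x) = composition of 1-morphisms in X/G:
   (a,p) (b,q) = (a b, mu_{a,b,x} ∘ a(q) ∘ p).  On 2-morphisms it is the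
   tensor product of G; associator and unitors are those of G. *)
Definition ker_tens (G : TwoGroup) (X : Gpd) (A : Action G X) (x : X)
  (k l : KerOb A x) : KerOb A x :=
  {| kg := tens (kg k) (kg l);
     kf := mu A (kg k) (kg l) x ∘ actH A (idm (kg k)) (kf l) ∘ kf k;
     kiso := kiso_tens (kiso k) (kiso l) |}.

(* the unit object: the identity 1-morphism (1_G, eta_x) of x in X/G *)
Definition ker_unit (G : TwoGroup) (X : Gpd) (A : Action G X) (x : X)
  : KerOb A x :=
  {| kg := one G; kf := eta A x; kiso := inhabits (idm (one G)) |}.

(* essentially surjective.  Since the Cone is strict, its associator and *)
(* unitors are the morphisms given by gamma = 1 in pi_1(G); morphisms of *)
(* Ker are compared through their underlying G-morphisms.                *)

Record ConeKerEquiv (G : TwoGroup) (X : Gpd) (A : Action G X) (x : X) := {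
  F0 : Hom x x -> KerOb A x;
  F1 : forall u u' : Hom x x, ConeHom A x u u' -> KerHom (F0 u) (F0 u');
  F1_id : forall (u : Hom x x) (H : phi A x (idm (one G)) ∘ u = u),
      proj1_sig (F1 (cone_hom (idm (one G)) H)) = idm (kg (F0 u));
  F1_comp : forall (u u' u'' : Hom x x) (γ : ConeHom A x u u') (γ' : ConeHom A x u' u'')
      (H : phi A x (proj1_sig γ' ∘ proj1_sig γ) ∘ u = u''),
      proj1_sig (F1 (cone_hom (proj1_sig γ' ∘ proj1_sig γ) H))
      = proj1_sig (F1 γ') ∘ proj1_sig (F1 γ);
  Fm : forall u v : Hom x x, KerHom (ker_tens (F0 u) (F0 v)) (F0 (u ∘ v));
  Fm_nat : forall (u u' v v' : Hom x x) (γ : ConeHom A x u u') (δ : ConeHom A x v v')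
      (H : phi A x (proj1_sig γ ∘ proj1_sig δ) ∘ (u ∘ v) = u' ∘ v'),
      proj1_sig (Fm u' v') ∘ tensH (proj1_sig (F1 γ)) (proj1_sig (F1 δ))
      = proj1_sig (F1 (cone_hom (proj1_sig γ ∘ proj1_sig δ) H)) ∘ proj1_sig (Fm u v);
  Fm_assoc : forall (u v w : Hom x x)
      (H : phi A x (idm (one G)) ∘ ((u ∘ v) ∘ w) = u ∘ (v ∘ w)),
      proj1_sig (F1 (cone_hom (idm (one G)) H)) ∘ proj1_sig (Fm (u ∘ v) w)
        ∘ tensH (proj1_sig (Fm u v)) (idm (kg (F0 w)))
      = proj1_sig (Fm u (v ∘ w)) ∘ tensH (idm (kg (F0 u))) (proj1_sig (Fm v w))
        ∘ assoc (kg (F0 u)) (kg (F0 v)) (kg (F0 w));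
  Fe : KerHom (ker_unit A x) (F0 (idm x));
  Fe_lun : forall (u : Hom x x) (H : phi A x (idm (one G)) ∘ (idm x ∘ u) = u),
      lun (kg (F0 u))
      = proj1_sig (F1 (cone_hom (idm (one G)) H)) ∘ proj1_sig (Fm (idm x) u)
        ∘ tensH (proj1_sig Fe) (idm (kg (F0 u)));
  Fe_run : forall (u : Hom x x) (H : phi A x (idm (one G)) ∘ (u ∘ idm x) = u),
      run (kg (F0 u))
      = proj1_sig (F1 (cone_hom (idm (one G)) H)) ∘ proj1_sig (Fm u (idm x))
        ∘ tensH (idm (kg (F0 u))) (proj1_sig Fe);
  F1_faithful : forall (u u' : Hom x x) (γ δ : ConeHom A x u u'),
      proj1_sig (F1 γ) = proj1_sig (F1 δ) -> proj1_sig γ = proj1_sig δ;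
  F1_full : forall (u u' : Hom x x) (a : KerHom (F0 u) (F0 u')),
      exists γ : ConeHom A x u u', proj1_sig (F1 γ) = proj1_sig a;
  F0_esurj : forall k : KerOb A x, exists u : Hom x x, inhabited (KerHom (F0 u) k)
}.

(* Every object (g, f) of the kernel has g ≅ 1, so it is isomorphic to one of the form
   (1, η_x ∘ u⁻¹) with u ∈ Aut x.  A morphism (1, η_x u⁻¹) → (1, η_x u'⁻¹) is a γ ∈ π₁(G)
   with γ·(η_x u⁻¹) = η_x u'⁻¹, i.e. with φ_x(γ⁻¹) u = u', using that φ_x(γ) is central
   by naturality of η.  Hence u ↦ (1, η_x u⁻¹), γ ↦ γ⁻¹ is fully faithful and essentially
   surjective.  It is monoidal with structure morphism l_1 : 1 ⊗ 1 → 1, and its coherence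
   reduces to Kelly's identity l_1 = r_1 and to the commutativity of π₁(G)
   (Eckmann–Hilton), which also makes γ ↦ γ⁻¹ a homomorphism. *)

From Stdlib Require Import Setoid.
Set Implicit Arguments.
Unset Strict Implicit.

Section GroupoidFacts.
Variable C : Gpd.
Hypothesis L : isGroupoid C.

Lemma comp_cancel_r (a b c : C) (f g : Hom b c) (h : Hom a b) : f ∘ h = g ∘ h -> f = g.
Proof.
  intro E.
  rewrite <- (comp_id_r L f), <- (comp_id_r L g), <- (inv_r L h), !(comp_assoc L), E.
  reflexivity.
Qed.

Lemma comp_cancel_l (a b c : C) (f g : Hom a b) (h : Hom b c) : h ∘ f = h ∘ g -> f = g.
Proof.
  intro E.
  rewrite <- (comp_id_l L f), <- (comp_id_l L g), <- (inv_l L h), <- !(comp_assoc L), E.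
  reflexivity.
Qed.

Lemma inv_idm (a : C) : inv (idm a) = idm a.
Proof. rewrite <- (comp_id_l L (inv (idm a))). apply (inv_r L). Qed.

Lemma inv_comp (a b c : C) (g : Hom b c) (f : Hom a b) : inv (g ∘ f) = inv f ∘ inv g.
Proof.
  apply (comp_cancel_l (h := g ∘ f)).
  rewrite (inv_r L), (comp_assoc L), <- (comp_assoc L g f), (inv_r L), (comp_id_r L), (inv_r L).
  reflexivity.
Qed.

Lemma inv_inv (a b : C) (f : Hom a b) : inv (inv f) = f.
Proof. apply (comp_cancel_l (h := inv f)). rewrite (inv_r L), (inv_l L). reflexivity. Qed.

Lemma inv_inj (a b : C) (f g : Hom a b) : inv f = inv g -> f = g.
Proof. intro E. rewrite <- (inv_inv f), E, inv_inv. reflexivity. Qed.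

End GroupoidFacts.

Section TwoGroupFacts.
Variable G : TwoGroup.
Local Notation LG := (tg_groupoid G).

Lemma tensH_id (a b : G) : tensH (idm a) (idm b) = idm (tens a b).
Proof. destruct (tg_laws G) as (H & _). apply H. Qed.

Lemma tensH_comp (a a' a'' b b' b'' : G) (f : Hom a a') (f' : Hom a' a'')
  (g : Hom b b') (g' : Hom b' b'') : tensH (f' ∘ f) (g' ∘ g) = tensH f' g' ∘ tensH f g.
Proof. destruct (tg_laws G) as (_ & H & _). apply H. Qed.

Lemma assoc_natural (a a' b b' c c' : G) (f : Hom a a') (g : Hom b b') (h : Hom c c') :
  assoc a' b' c' ∘ tensH (tensH f g) h = tensH f (tensH g h) ∘ assoc a b c.
Proof. destruct (tg_laws G) as (_ & _ & H & _). apply H. Qed.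

Lemma lun_natural (a a' : G) (f : Hom a a') : lun a' ∘ tensH (idm (one G)) f = f ∘ lun a.
Proof. destruct (tg_laws G) as (_ & _ & _ & H & _). apply H. Qed.

Lemma run_natural (a a' : G) (f : Hom a a') : run a' ∘ tensH f (idm (one G)) = f ∘ run a.
Proof. destruct (tg_laws G) as (_ & _ & _ & _ & H & _). apply H. Qed.

Lemma pentagon (a b c d : G) :
  tensH (idm a) (assoc b c d) ∘ assoc a (tens b c) d ∘ tensH (assoc a b c) (idm d)
  = assoc a b (tens c d) ∘ assoc (tens a b) c d.
Proof. destruct (tg_laws G) as (_ & _ & _ & _ & _ & H & _). apply H. Qed.

Lemma triangle (a b : G) :
  tensH (idm a) (lun b) ∘ assoc a (one G) b = tensH (run a) (idm b).
Proof. destruct (tg_laws G) as (_ & _ & _ & _ & _ & _ & H & _). apply H. Qed.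

Lemma tensH_comp_l (b a a' a'' : G) (g : Hom a a') (g' : Hom a' a'') :
  tensH (g' ∘ g) (idm b) = tensH g' (idm b) ∘ tensH g (idm b).
Proof. rewrite <- tensH_comp, (comp_id_l LG). reflexivity. Qed.

Lemma tensH_comp_r (a b b' b'' : G) (g : Hom b b') (g' : Hom b' b'') :
  tensH (idm a) (g' ∘ g) = tensH (idm a) g' ∘ tensH (idm a) g.
Proof. rewrite <- tensH_comp, (comp_id_l LG). reflexivity. Qed.

Lemma tensH_one_l_inj (a b : G) (f g : Hom a b) :
  tensH (idm (one G)) f = tensH (idm (one G)) g -> f = g.
Proof.
  intro E. apply (comp_cancel_r LG (h := lun a)).
  rewrite <- !lun_natural, E. reflexivity.
Qed.

Lemma tensH_one_r_inj (a b : G) (f g : Hom a b) :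
  tensH f (idm (one G)) = tensH g (idm (one G)) -> f = g.
Proof.
  intro E. apply (comp_cancel_r LG (h := run a)).
  rewrite <- !run_natural, E. reflexivity.
Qed.

(* Kelly: left whiskering by 1 is faithful, and the whiskered identity follows from the
   pentagon and the triangle. *)
Lemma lun_tens_assoc (a b : G) :
  lun (tens a b) ∘ assoc (one G) a b = tensH (lun a) (idm b).
Proof.
  apply tensH_one_l_inj.
  apply (comp_cancel_r LG
    (h := assoc (one G) (tens (one G) a) b ∘ tensH (assoc (one G) (one G) a) (idm b))).
  rewrite tensH_comp_r.
  transitivity (tensH (idm (one G)) (lun (tens a b)) ∘
     (tensH (idm (one G)) (assoc (one G) a b) ∘ assoc (one G) (tens (one G) a) b
       ∘ tensH (assoc (one G) (one G) a) (idm b))).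
  { rewrite !(comp_assoc LG). reflexivity. }
  rewrite pentagon, (comp_assoc LG), triangle.
  rewrite <- (tensH_id a b) at 1. rewrite <- assoc_natural.
  rewrite <- triangle, tensH_comp_l, (comp_assoc LG), assoc_natural.
  rewrite !(comp_assoc LG). reflexivity.
Qed.

Lemma lun_one_run_one : lun (one G) = run (one G).
Proof.
  apply tensH_one_r_inj.
  rewrite <- lun_tens_assoc, <- triangle.
  f_equal. apply (comp_cancel_l LG (h := lun (one G))).
  rewrite lun_natural. reflexivity.
Qed.

Lemma lun_one_natural_l (p : pi1 G) : lun (one G) ∘ tensH p (idm (one G)) = p ∘ lun (one G).
Proof. rewrite lun_one_run_one. apply run_natural. Qed.

Lemma lun_one_tensH (p q : pi1 G) : lun (one G) ∘ tensH p q = p ∘ q ∘ lun (one G).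
Proof.
  transitivity (lun (one G) ∘ (tensH p (idm (one G)) ∘ tensH (idm (one G)) q)).
  { rewrite <- tensH_comp, (comp_id_r LG), (comp_id_l LG). reflexivity. }
  rewrite (comp_assoc LG), lun_one_natural_l, <- (comp_assoc LG), lun_natural.
  apply (comp_assoc LG).
Qed.

Lemma pi1_comm (p q : pi1 G) : p ∘ q = q ∘ p.
Proof.
  apply (comp_cancel_r LG (h := lun (one G))). rewrite <- lun_one_tensH.
  transitivity (lun (one G) ∘ (tensH (idm (one G)) q ∘ tensH p (idm (one G)))).
  { rewrite <- tensH_comp, (comp_id_r LG), (comp_id_l LG). reflexivity. }
  rewrite (comp_assoc LG), lun_natural, <- (comp_assoc LG), lun_one_natural_l.
  apply (comp_assoc LG).
Qed.

Lemma pi1_inv_comp (p q : pi1 G) : inv (p ∘ q) = inv p ∘ inv q.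
Proof. rewrite (inv_comp LG). apply pi1_comm. Qed.

Lemma lun_one_assoc :
  lun (one G) ∘ tensH (lun (one G)) (idm (one G))
  = lun (one G) ∘ tensH (idm (one G)) (lun (one G)) ∘ assoc (one G) (one G) (one G).
Proof. rewrite <- (comp_assoc LG), triangle, lun_one_run_one. reflexivity. Qed.

End TwoGroupFacts.

Section ActionKernel.
Variables (G : TwoGroup) (X : Groupoid) (A : Action G X).
Local Notation LG := (tg_groupoid G).
Local Notation LX := (gd_laws X).

Lemma actH_id (g : G) (y : X) : actH A (idm g) (idm y) = idm (act A g y).
Proof. destruct (act_laws A) as (H & _). apply H. Qed.

Lemma actH_comp (g g' g'' : G) (y y' y'' : X) (a : Hom g g') (a' : Hom g' g'')
  (f : Hom y y') (f' : Hom y' y'') : actH A (a' ∘ a) (f' ∘ f) = actH A a' f' ∘ actH A a f.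
Proof. destruct (act_laws A) as (_ & H & _). apply H. Qed.

Lemma eta_natural (y y' : X) (f : Hom y y') :
  eta A y' ∘ f = actH A (idm (one G)) f ∘ eta A y.
Proof. destruct (act_laws A) as (_ & _ & _ & H & _). apply H. Qed.

Lemma act_lun (g : G) (y : X) :
  actH A (lun g) (idm y) ∘ mu A (one G) g y ∘ eta A (act A g y) = idm (act A g y).
Proof. destruct (act_laws A) as (_ & _ & _ & _ & _ & H & _). apply H. Qed.

Lemma actH_interchange (g g' : G) (y y' : X) (a : Hom g g') (f : Hom y y') :
  actH A a (idm y') ∘ actH A (idm g) f = actH A (idm g') f ∘ actH A a (idm y).
Proof.
  rewrite <- !actH_comp, (comp_id_l LG), (comp_id_r LG), (comp_id_l LX), (comp_id_r LX).
  reflexivity.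
Qed.

Lemma actH_inv (g g' : G) (y : X) (a : Hom g g') :
  inv (actH A a (idm y)) = actH A (inv a) (idm y).
Proof.
  apply (comp_cancel_l LX (h := actH A a (idm y))).
  rewrite (inv_r LX), <- actH_comp, (inv_r LG), (comp_id_l LX), actH_id. reflexivity.
Qed.

Lemma eta_inv_natural (y y' : X) (f : Hom y y') :
  inv (eta A y') ∘ actH A (idm (one G)) f = f ∘ inv (eta A y).
Proof.
  apply (comp_cancel_l LX (h := eta A y')).
  rewrite !(comp_assoc LX), (inv_r LX), (comp_id_l LX), eta_natural, <- (comp_assoc LX),
    (inv_r LX), (comp_id_r LX).
  reflexivity.
Qed.

Lemma phi_natural (y y' : X) (f : Hom y y') (γ : pi1 G) :
  phi A y' γ ∘ f = f ∘ phi A y γ.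
Proof.
  unfold phi.
  rewrite <- (comp_assoc LX _ (eta A y') f), eta_natural, (comp_assoc LX),
    <- (comp_assoc LX (inv (eta A y'))), actH_interchange, (comp_assoc LX),
    eta_inv_natural, !(comp_assoc LX).
  reflexivity.
Qed.

Lemma eta_phi (y : X) (γ : pi1 G) : eta A y ∘ phi A y γ = actH A γ (idm y) ∘ eta A y.
Proof.
  unfold phi.
  rewrite !(comp_assoc LX), (inv_r LX), (comp_id_l LX). reflexivity.
Qed.

Lemma phi_inv (y : X) (γ : pi1 G) : inv (phi A y γ) = phi A y (inv γ).
Proof.
  unfold phi.
  rewrite !(inv_comp LX), (inv_inv LX), actH_inv, (comp_assoc LX). reflexivity.
Qed.

Variable x : X.

(* The inverse is needed because the product of the kernel composes in the opposite order. *)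
Definition ker_of_aut (u : Hom x x) : KerOb A x :=
  {| kg := one G; kf := eta A x ∘ inv u; kiso := inhabits (idm (one G)) |}.

Lemma kf_ker_of_aut_inj (u u' : Hom x x) : kf (ker_of_aut u) = kf (ker_of_aut u') -> u = u'.
Proof. intro E. apply (inv_inj LX), (comp_cancel_l LX E). Qed.

Lemma actH_kf_ker_of_aut (γ : pi1 G) (u : Hom x x) :
  actH A (inv γ) (idm x) ∘ kf (ker_of_aut u) = kf (ker_of_aut (phi A x γ ∘ u)).
Proof.
  simpl. rewrite (inv_comp LX), phi_inv, <- phi_natural, !(comp_assoc LX), eta_phi.
  reflexivity.
Qed.

Lemma ker_hom_of_cone_spec (u u' : Hom x x) (c : ConeHom A x u u') :
  actH A (inv (proj1_sig c)) (idm x) ∘ kf (ker_of_aut u) = kf (ker_of_aut u').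
Proof. destruct c as [γ <-]. apply actH_kf_ker_of_aut. Qed.

Definition ker_hom_of_cone (u u' : Hom x x) (c : ConeHom A x u u')
  : KerHom (ker_of_aut u) (ker_of_aut u') :=
  exist _ (inv (proj1_sig c)) (ker_hom_of_cone_spec c).

Lemma ker_hom_of_cone_full (u u' : Hom x x) (a : KerHom (ker_of_aut u) (ker_of_aut u')) :
  exists γ : ConeHom A x u u', proj1_sig (ker_hom_of_cone γ) = proj1_sig a.
Proof.
  destruct a as [a Ha].
  assert (Hγ : phi A x (inv a) ∘ u = u').
  { apply kf_ker_of_aut_inj. rewrite <- actH_kf_ker_of_aut, (inv_inv LG). exact Ha. }
  exists (cone_hom (inv a) Hγ). apply (inv_inv LG).
Qed.

Lemma ker_of_aut_esurj (k : KerOb A x) : exists u, inhabited (KerHom (ker_of_aut u) k).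
Proof.
  destruct k as [g f [b]].
  exists (inv (inv (eta A x) ∘ actH A b (idm x) ∘ f)).
  constructor. exists (inv b). simpl.
  rewrite (inv_inv LX), !(comp_assoc LX), <- (comp_assoc LX _ (eta A x)), (inv_r LX),
    (comp_id_r LX), <- actH_comp, (inv_l LG), (comp_id_l LX), actH_id, (comp_id_l LX).
  reflexivity.
Qed.

Lemma ker_of_aut_tens_spec (u v : Hom x x) :
  actH A (lun (one G)) (idm x) ∘ kf (ker_tens (ker_of_aut u) (ker_of_aut v))
  = kf (ker_of_aut (u ∘ v)).
Proof.
  simpl. rewrite (inv_comp LX).
  rewrite (comp_assoc LX (mu A _ _ _ ∘ _)), <- (comp_assoc LX _ (actH A _ _)), <- eta_natural.
  rewrite !(comp_assoc LX), act_lun, (comp_id_l LX). reflexivity.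
Qed.

Definition ker_of_aut_tens (u v : Hom x x)
  : KerHom (ker_tens (ker_of_aut u) (ker_of_aut v)) (ker_of_aut (u ∘ v)) :=
  exist _ (lun (one G)) (ker_of_aut_tens_spec u v).

Lemma ker_of_aut_unit_spec :
  actH A (idm (one G)) (idm x) ∘ kf (ker_unit A x) = kf (ker_of_aut (idm x)).
Proof. simpl. rewrite actH_id, (comp_id_l LX), (inv_idm LX), (comp_id_r LX). reflexivity. Qed.

Definition ker_of_aut_unit : KerHom (ker_unit A x) (ker_of_aut (idm x)) :=
  exist _ (idm (one G)) ker_of_aut_unit_spec.

End ActionKernel.

Theorem proposition1p1 (G : TwoGroup) (X : Groupoid) (A : Action G X) (x : X) :
  inhabited (ConeKerEquiv A x).
Proof.
  pose proof (tg_groupoid G) as LG.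
  unshelve refine (inhabits (@Build_ConeKerEquiv G X A x (@ker_of_aut G X A x)
    (@ker_hom_of_cone G X A x) _ _ (@ker_of_aut_tens G X A x) _ _ (@ker_of_aut_unit G X A x) _ _ _ _ _));
    simpl.
  - intros u _. apply (inv_idm LG).
  - intros u u' u'' γ γ' _. apply pi1_inv_comp.
  - intros u u' v v' γ δ _. rewrite lun_one_tensH, pi1_inv_comp. reflexivity.
  - intros u v w _. rewrite (inv_idm LG), (comp_id_l LG). apply lun_one_assoc.
  - intros u _. rewrite (inv_idm LG), (comp_id_l LG), tensH_id, (comp_id_r LG). reflexivity.
  - intros u _. rewrite (inv_idm LG), (comp_id_l LG), tensH_id, (comp_id_r LG).
    symmetry. apply lun_one_run_one.
  - intros u u' γ δ. apply (inv_inj LG).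
  - intros u u'. apply ker_hom_of_cone_full.
  - apply ker_of_aut_esurj.
Qed.
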